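(* Let $A,B$ be finite-dimensional quantum systems. Let $\mathcal{E}_1$ be a doubly stochastic quantum operation on $AB$ (trace-preserving and unital, $\mathcal{E}_1(I)=I$), and let $\mathcal{E}_2$ be an arbitrary trace-preserving quantum operation on $AB$. Then $$R_r(\mathcal{E}_1\circ\mathcal{E}_2)\leq R_r(\mathcal{E}_1)+R_r(\mathcal{E}_2)+R_r(\mathcal{E}_1)R_r(\mathcal{E}_2).$$
   Context: A quantum operation (completely positive map) $\mathcal{E}$ on $AB$ is separable if it has an operator-sum representation $\mathcal{E}(\rho)=\sum_j(A_j\otimes B_j)\rho(A_j^\dagger\otimes B_j^\dagger)$. For trace-preserving quantum operations $\mathcal{E},\mathcal{F}$ on $AB$, $R(\mathcal{E}\|\mathcal{F})$ is the minimal $t\geq0$ such that $\mathcal{E}+t\mathcal{F}$ is separable, and the random robustness is $R_r(\mathcal{E})=R(\mathcal{E}\|\mathcal{D})$ with $\mathcal{D}(\rho)=\mathrm{tr}(\rho)\,I/(d_Ad_B)$, $d_A,d_B$ the dimensions of $A,B$. *)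

From HB Require Import structures.
From mathcomp Require Import all_boot all_order all_algebra.
From mathcomp Require Import complex mxtens.
From mathcomp Require Import classical_sets reals.

Set Implicit Arguments.
Unset Strict Implicit.
Unset Printing Implicit Defensive.

Import Order.TTheory GRing.Theory Num.Theory.
Local Open Scope ring_scope.
Local Open Scope complex_scope.

Section QuantumOps.
Variables (R : realType) (dA dB : nat).

Local Notation C := (R[i]).
(* operators on the composite system AB = C^dA (x) C^dB *)
Local Notation op := ('M[C]_(dA * dB)).

Definition adjmx (n m : nat) (M : 'M[C]_(n, m)) : 'M[C]_(m, n) :=
  (map_mx (@Num.conj C) M)^T.

Definition supop := op -> op.

Definition kraus_map (Ks : seq op) : supop :=
  fun rho => \sum_(K <- Ks) (K *m rho *m adjmx K).

(* quantum operation = completely positive map, i.e. one with an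
   operator-sum (Kraus) representation *)
Definition quantum_operation (E : supop) : Prop :=
  exists Ks : seq op, forall rho, E rho = kraus_map Ks rho.

Definition trace_preserving_qo (E : supop) : Prop :=
  quantum_operation E /\ forall rho, \tr (E rho) = \tr rho.

Definition doubly_stochastic (E : supop) : Prop :=
  trace_preserving_qo E /\ E 1%:M = 1%:M.

Definition separable (E : supop) : Prop :=
  exists ABs : seq ('M[C]_dA * 'M[C]_dB),
    forall rho, E rho = kraus_map [seq tensmx p.1 p.2 | p <- ABs] rho.

Definition depol : supop :=
  fun rho => (\tr rho / (dA * dB)%:R) *: 1%:M.

(* R(E||F) = min { t >= 0 | E + t F separable } (taken as an infimum) *)
Definition rel_robustness (E F : supop) : R :=
  inf [set t : R | 0 <= t /\ separable (fun rho => E rho + (t%:C) *: F rho)].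

Definition random_robustness (E : supop) : R := rel_robustness E depol.

End QuantumOps.

From HB Require Import structures.
From mathcomp Require Import all_boot all_order all_algebra.
From mathcomp Require Import complex mxtens.
From mathcomp Require Import classical_sets reals.
From mathcomp Require Import ring lra.
Import Order.TTheory GRing.Theory Num.Theory.
Local Open Scope ring_scope.
Set Implicit Arguments.
Unset Strict Implicit.
Unset Printing Implicit Defensive.

(* Write E_t for E + t D.  Since D o E2 = D (E2 is trace preserving), E1 o D = D
   (E1 is unital) and D o D = D, we get E1_s o E2_t = (E1 o E2)_(s + t + s t); as
   separable maps are closed under composition, s + t + s t is admissible for
   E1 o E2 whenever s is admissible for E1 and t for E2, and taking infima gives
   the bound because s + t + s t = (1 + s)(1 + t) - 1 is increasing in s and t.
   The infima are over nonempty sets: conjugation by any K becomes separable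
   after adding enough noise tr(rho) I.  Indeed tr(rho) I is the sum of the
   conjugations by all matrix units, which are product operators, and the
   cross terms between two matrix units of K are made separable by
   polarization over the fourth roots of unity. *)

Lemma scalerV_mulrn (F : numFieldType) (V : lmodType F) n (v : V) :
  (0 < n)%N -> n%:R^-1 *: (v *+ n) = v.
Proof.
move=> n_gt0.
by rewrite -[X in _ *: X]scaler_nat scalerA mulVf ?pnatr_eq0 -?lt0n // scale1r.
Qed.

Section Sandwich.
Variable R : realType.
Local Notation C := R[i].

Lemma adjmxD m n (A B : 'M[C]_(m, n)) : adjmx (A + B) = adjmx A + adjmx B.
Proof. by rewrite /adjmx map_mxD linearD. Qed.

Lemma adjmxZ m n (a : C) (A : 'M[C]_(m, n)) : adjmx (a *: A) = a^* *: adjmx A.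
Proof. by rewrite /adjmx map_mxZ linearZ. Qed.

Lemma adjmxM m n p (A : 'M[C]_(m, n)) (B : 'M[C]_(n, p)) :
  adjmx (A *m B) = adjmx B *m adjmx A.
Proof. by rewrite /adjmx map_mxM trmx_mul. Qed.

Lemma adjmx_delta m n (i : 'I_m) (j : 'I_n) :
  adjmx (delta_mx i j : 'M[C]_(m, n)) = delta_mx j i.
Proof. by rewrite /adjmx map_delta_mx trmx_delta. Qed.

Variable n : nat.
Implicit Types (M N rho : 'M[C]_n) (a : C).

Definition sandwich M N rho := M *m rho *m adjmx N.

Lemma sandwichDl M1 M2 N rho :
  sandwich (M1 + M2) N rho = sandwich M1 N rho + sandwich M2 N rho.
Proof. by rewrite /sandwich !mulmxDl. Qed.

Lemma sandwichDr M N1 N2 rho :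
  sandwich M (N1 + N2) rho = sandwich M N1 rho + sandwich M N2 rho.
Proof. by rewrite /sandwich adjmxD mulmxDr. Qed.

Lemma sandwichZl a M N rho : sandwich (a *: M) N rho = a *: sandwich M N rho.
Proof. by rewrite /sandwich !scalemxAl. Qed.

Lemma sandwichZr a M N rho : sandwich M (a *: N) rho = a^* *: sandwich M N rho.
Proof. by rewrite /sandwich adjmxZ scalemxAr. Qed.

Lemma sandwichNl M N rho : sandwich (- M) N rho = - sandwich M N rho.
Proof. by rewrite -scaleN1r sandwichZl scaleN1r. Qed.

Lemma sandwichNr M N rho : sandwich M (- N) rho = - sandwich M N rho.
Proof. by rewrite -scaleN1r sandwichZr rmorphN1 scaleN1r. Qed.

Lemma sandwich_suml I (r : seq I) (F : I -> 'M[C]_n) N rho :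
  sandwich (\sum_(i <- r) F i) N rho = \sum_(i <- r) sandwich (F i) N rho.
Proof.
apply: (big_morph (fun M => sandwich M N rho)) => [M1 M2|]; first exact: sandwichDl.
by rewrite /sandwich !mul0mx.
Qed.

Lemma sandwich_sumr I (r : seq I) (F : I -> 'M[C]_n) M rho :
  sandwich M (\sum_(i <- r) F i) rho = \sum_(i <- r) sandwich M (F i) rho.
Proof.
apply: (big_morph (fun N => sandwich M N rho)) => [N1 N2|]; first exact: sandwichDr.
by rewrite /sandwich /adjmx map_mx0 trmx0 mulmx0.
Qed.

Lemma sandwich_unitZ a M rho : a * a^* = 1 ->
  sandwich (a *: M) (a *: M) rho = sandwich M M rho.
Proof. by move=> a1; rewrite sandwichZl sandwichZr scalerA a1 scale1r. Qed.

Lemma sandwich_parallelogram M N rho :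
  sandwich (M + N) (M + N) rho + sandwich (M - N) (M - N) rho
  = (sandwich M M rho + sandwich N N rho) *+ 2.
Proof.
rewrite !(sandwichDl, sandwichDr, sandwichNl, sandwichNr).
move: (sandwich M M rho) (sandwich M N rho) (sandwich N M rho) (sandwich N N rho).
by move=> A B C' D; apply/matrixP => x y; rewrite !(mxE, mulr2n); ring.
Qed.

Lemma sandwich_delta (i j : 'I_n) rho :
  sandwich (delta_mx i j) (delta_mx i j) rho = rho j j *: delta_mx i i.
Proof.
apply/matrixP => x y; rewrite /sandwich adjmx_delta !mxE.
rewrite (bigD1 j) //= big1 => [|k /negbTE jk]; last by rewrite !mxE jk mulr0.
rewrite !mxE (bigD1 j) //= big1 => [|k /negbTE jk]; last by rewrite !mxE jk andbF mul0r.
rewrite !mxE !eqxx andbT !addr0.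
by case: (x == i); case: (y == i); rewrite /= ?(mul1r, mulr1, mul0r, mulr0).
Qed.

Lemma sum_sandwich_delta rho :
  \sum_(i < n) \sum_(j < n) sandwich (delta_mx i j) (delta_mx i j) rho = \tr rho *: 1%:M.
Proof.
under eq_bigr do under eq_bigr do rewrite sandwich_delta.
rewrite exchange_big /mxtrace scaler_suml; apply: eq_bigr => j _.
by rewrite -scaler_sumr -mx1_sum_delta.
Qed.

End Sandwich.

Section Tensor.
Variables (T : comPzRingType) (m n p q : nat).
Implicit Types (X : 'M[T]_(m, n)) (Y : 'M[T]_(p, q)).

Lemma tensmxDl X1 X2 Y : (X1 + X2) *t Y = X1 *t Y + X2 *t Y.
Proof. by apply/matrixP => i j; rewrite !mxE mulrDl. Qed.

Lemma tensmxDr X Y1 Y2 : X *t (Y1 + Y2) = X *t Y1 + X *t Y2.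
Proof. by apply/matrixP => i j; rewrite !mxE mulrDr. Qed.

Lemma tensmxZl a X Y : (a *: X) *t Y = a *: (X *t Y).
Proof. by apply/matrixP => i j; rewrite !mxE mulrA. Qed.

Lemma tensmxZr a X Y : X *t (a *: Y) = a *: (X *t Y).
Proof. by apply/matrixP => i j; rewrite !mxE mulrCA. Qed.

End Tensor.

Lemma tensmx_delta (T : comPzRingType) m n (a a' : 'I_m) (b b' : 'I_n) :
  delta_mx a a' *t delta_mx b b' =
  delta_mx (mxtens_index (a, b)) (mxtens_index (a', b')) :> 'M[T]_(m * n).
Proof.
apply/matrixP => i j.
case: (mxtens_indexP i) => i1 i2; case: (mxtens_indexP j) => j1 j2.
rewrite tensmxE !mxE !(inj_eq (can_inj (@mxtens_indexK _ _))) !xpair_eqE.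
by rewrite -natrM mulnb andbACA.
Qed.

Lemma delta_mx_tens (T : comPzRingType) m n (i j : 'I_(m * n)) :
  delta_mx i j = delta_mx (mxtens_unindex i).1 (mxtens_unindex j).1
                 *t delta_mx (mxtens_unindex i).2 (mxtens_unindex j).2 :> 'M[T]_(m * n).
Proof. by rewrite tensmx_delta -!surjective_pairing !mxtens_unindexK. Qed.

Section Separable.
Variables (R : realType) (dA dB : nat).
Local Notation C := R[i].
Local Notation op := 'M[C]_(dA * dB).
Implicit Types (E F : supop R dA dB) (rho : op).

Let half_ge0 : 0 <= 2^-1 :> C.
Proof. by rewrite invr_ge0 ler0n. Qed.

Lemma separable_ext E F : (forall rho, E rho = F rho) -> separable E -> separable F.
Proof. by move=> EF [L HL]; exists L => rho; rewrite -EF. Qed.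

Lemma separable0 : separable (fun _ : op => 0 : op).
Proof. by exists [::] => rho; rewrite /kraus_map big_nil. Qed.

Lemma separableD E F :
  separable E -> separable F -> separable (fun rho => E rho + F rho).
Proof.
move=> [L1 H1] [L2 H2]; exists (L1 ++ L2) => rho.
by rewrite H1 H2 /kraus_map map_cat big_cat.
Qed.

Lemma separable_sum I (r : seq I) (F : I -> supop R dA dB) :
  (forall i, separable (F i)) -> separable (fun rho => \sum_(i <- r) F i rho).
Proof.
move=> sepF; elim: r => [|x r IH].
  by apply: separable_ext separable0 => rho; rewrite big_nil.
by apply: separable_ext (separableD (sepF x) IH) => rho; rewrite big_cons.
Qed.

Lemma separableZ E (a : C) :
  0 <= a -> separable E -> separable (fun rho => a *: E rho).
Proof.
move=> a0 [L HL]; exists [seq (sqrtC a *: p.1, p.2) | p <- L] => rho.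
rewrite HL /kraus_map -map_comp scaler_sumr !big_map; apply: eq_bigr => p _ /=.
rewrite tensmxZl.
change (a *: sandwich (p.1 *t p.2) (p.1 *t p.2) rho
        = sandwich (sqrtC a *: (p.1 *t p.2)) (sqrtC a *: (p.1 *t p.2)) rho).
have sqrt_a_ge0 : 0 <= sqrtC a by rewrite sqrtC_ge0.
by rewrite sandwichZl sandwichZr scalerA (geC0_conj sqrt_a_ge0) -expr2 sqrtCK.
Qed.

Lemma separable_tens (X : 'M[C]_dA) (Y : 'M[C]_dB) :
  separable (sandwich (X *t Y) (X *t Y)).
Proof. by exists [:: (X, Y)] => rho; rewrite /kraus_map big_seq1. Qed.

Lemma separable_comp E F : separable E -> separable F -> separable (E \o F).
Proof.
move=> [L1 H1] [L2 H2].
exists [seq (p.1.1 *m p.2.1, p.1.2 *m p.2.2) | p <- [seq (x, y) | x <- L1, y <- L2]].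
move=> rho /=; rewrite H2 H1 /kraus_map -map_comp !big_map big_allpairs.
apply: eq_bigr => p _; rewrite mulmx_sumr mulmx_suml.
by apply: eq_bigr => q _ /=; rewrite -tensmx_mul adjmxM !mulmxA.
Qed.

Section Polarization.
Variables (X X' : 'M[C]_dA) (Y Y' : 'M[C]_dB).

Let P := X *t Y + X' *t Y'.
Let B := X *t Y'.
Let D := X' *t Y.

Lemma tensmx_rotate (w : C) : w * w^* = 1 ->
  (X + w *: X') *t (Y + w^* *: Y') = P + (w^* *: B + w *: D).
Proof.
move=> w1; rewrite tensmxDl !tensmxDr !tensmxZl !tensmxZr scalerA w1 scale1r.
by rewrite [_ + X' *t Y']addrC addrACA.
Qed.

(* Averaging over w and -w cancels the terms odd in w; combining w = 1 and w = 'i in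
   separable_polarization then cancels the cross terms between B and D, which carry w^2. *)
Lemma separable_tens_rotate (w : C) : w * w^* = 1 ->
  separable (fun rho =>
    sandwich P P rho + sandwich (w^* *: B + w *: D) (w^* *: B + w *: D) rho).
Proof.
move=> w1; have w1N : - w * (- w)^* = 1 by rewrite rmorphN mulrNN.
have := separableD (separable_tens (X + w *: X') (Y + w^* *: Y'))
                   (separable_tens (X + - w *: X') (Y + (- w)^* *: Y')).
move/(separableZ half_ge0); apply: separable_ext => rho.
rewrite !tensmx_rotate // rmorphN !scaleNr -opprD.
by rewrite sandwich_parallelogram scalerV_mulrn.
Qed.

Lemma separable_polarization :
  separable (fun rho => sandwich P P rho + sandwich B B rho + sandwich D D rho).
Proof.
have one1 : 1 * 1^* = 1 :> C by rewrite conjC1 mulr1.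
have i1 : 'i * 'i^* = 1 :> C by rewrite conjCi mulrN -expr2 sqrCi opprK.
have := separableD (separable_tens_rotate one1) (separable_tens_rotate i1).
rewrite conjC1 !scale1r conjCi scaleNr [- ('i *: B) + _]addrC -scalerBr.
move/(separableZ half_ge0); apply: separable_ext => rho.
rewrite sandwich_unitZ // addrACA [B + D]addrC sandwich_parallelogram -mulr2n -mulrnDl.
by rewrite scalerV_mulrn // addrA addrAC.
Qed.

End Polarization.

Lemma separable_sandwich_delta (i j : 'I_(dA * dB)) :
  separable (sandwich (delta_mx i j : op) (delta_mx i j)).
Proof. by rewrite delta_mx_tens; apply: separable_tens. Qed.

(* [\tr rho *: 1%:M] is [(dA * dB)%:R *: depol rho]; leaving out the normalization
   avoids dividing by the dimension. *)
Definition noise_correctable E :=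
  exists2 t : C, 0 <= t & separable (fun rho => E rho + t *: (\tr rho *: 1%:M)).

Lemma noise_correctable_ext E F :
  (forall rho, E rho = F rho) -> noise_correctable E -> noise_correctable F.
Proof.
by move=> EF [t t0 sepE]; exists t => //; apply: separable_ext sepE => rho; rewrite EF.
Qed.

Lemma separable_noise_correctable E : separable E -> noise_correctable E.
Proof.
by move=> sepE; exists 0 => //; apply: separable_ext sepE => rho; rewrite scale0r addr0.
Qed.

Lemma noise_correctableD E F :
  noise_correctable E -> noise_correctable F -> noise_correctable (fun rho => E rho + F rho).
Proof.
move=> [s s0 sepE] [t t0 sepF]; exists (s + t); first exact: addr_ge0.
by apply: separable_ext (separableD sepE sepF) => rho; rewrite scalerDl addrACA.
Qed.

Lemma noise_correctable_sum I (r : seq I) (F : I -> supop R dA dB) :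
  (forall i, noise_correctable (F i)) -> noise_correctable (fun rho => \sum_(i <- r) F i rho).
Proof.
move=> corrF; elim: r => [|x r IH].
  apply: separable_noise_correctable.
  by apply: separable_ext separable0 => rho; rewrite big_nil.
by apply: noise_correctable_ext (noise_correctableD (corrF x) IH) => rho; rewrite big_cons.
Qed.

Lemma noise_correctableZ E (a : C) :
  0 <= a -> noise_correctable E -> noise_correctable (fun rho => a *: E rho).
Proof.
move=> a0 [t t0 sepE]; exists (a * t); first exact: mulr_ge0.
by apply: separable_ext (separableZ a0 sepE) => rho; rewrite scalerDr scalerA.
Qed.

Lemma noise_correctableN_delta (i j : 'I_(dA * dB)) :
  noise_correctable (fun rho => - sandwich (delta_mx i j) (delta_mx i j) rho).
Proof.
pose F (k : 'I_(dA * dB) * 'I_(dA * dB)) : supop R dA dB :=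
  if k != (i, j) then sandwich (delta_mx k.1 k.2) (delta_mx k.1 k.2) else fun _ => 0.
have sepF k : separable (F k).
  by rewrite /F; case: (k != (i, j)); [apply: separable_sandwich_delta | apply: separable0].
exists 1 => //; apply: separable_ext (separable_sum (index_enum _) sepF) => rho.
rewrite scale1r -sum_sandwich_delta pair_bigA [in RHS](bigD1 (i, j)) //= addKr.
by rewrite [in RHS]big_mkcond; apply: eq_bigr => k _; rewrite /F; case: (k != (i, j)).
Qed.

Lemma noise_correctableN_tens_delta (c : C) (a a' : 'I_dA) (b b' : 'I_dB) :
  noise_correctable (fun rho =>
    - sandwich ((c *: delta_mx a a') *t delta_mx b b')
               ((c *: delta_mx a a') *t delta_mx b b') rho).
Proof.
apply: noise_correctable_ext
  (noise_correctableZ (mul_conjC_ge0 c) (noise_correctableN_delta _ _)).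
by move=> rho; rewrite tensmxZl tensmx_delta sandwichZl sandwichZr scalerA scalerN.
Qed.

Lemma noise_correctable_cross (c c' : C) (i j k l : 'I_(dA * dB)) :
  noise_correctable (fun rho => sandwich (c *: delta_mx i j) (c' *: delta_mx k l) rho
                              + sandwich (c' *: delta_mx k l) (c *: delta_mx i j) rho).
Proof.
pose X := c *: delta_mx (mxtens_unindex i).1 (mxtens_unindex j).1 : 'M[C]_dA.
pose Y := delta_mx (mxtens_unindex i).2 (mxtens_unindex j).2 : 'M[C]_dB.
pose X' := c' *: delta_mx (mxtens_unindex k).1 (mxtens_unindex l).1 : 'M[C]_dA.
pose Y' := delta_mx (mxtens_unindex k).2 (mxtens_unindex l).2 : 'M[C]_dB.
have -> : c *: delta_mx i j = X *t Y by rewrite tensmxZl -delta_mx_tens.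
have -> : c' *: delta_mx k l = X' *t Y' by rewrite tensmxZl -delta_mx_tens.
have nXY : noise_correctable (fun rho => - sandwich (X *t Y) (X *t Y) rho).
  exact: noise_correctableN_tens_delta.
have nXY' : noise_correctable (fun rho => - sandwich (X *t Y') (X *t Y') rho).
  exact: noise_correctableN_tens_delta.
have nX'Y : noise_correctable (fun rho => - sandwich (X' *t Y) (X' *t Y) rho).
  exact: noise_correctableN_tens_delta.
have nX'Y' : noise_correctable (fun rho => - sandwich (X' *t Y') (X' *t Y') rho).
  exact: noise_correctableN_tens_delta.
have := separable_noise_correctable (separable_polarization X X' Y Y').
move/noise_correctableD/(_ nXY)/noise_correctableD/(_ nX'Y').
move/noise_correctableD/(_ nXY')/noise_correctableD/(_ nX'Y).
apply: noise_correctable_ext => rho; rewrite !(sandwichDl, sandwichDr).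
move: (sandwich (X *t Y) (X *t Y) rho) (sandwich (X' *t Y') (X' *t Y') rho) => a b.
move: (sandwich (X *t Y) (X' *t Y') rho) (sandwich (X' *t Y') (X *t Y) rho) => u v.
move: (sandwich (X *t Y') (X *t Y') rho) (sandwich (X' *t Y) (X' *t Y) rho) => p q.
by apply/matrixP => x y; rewrite !mxE; ring.
Qed.

Lemma noise_correctable_sandwich (K : op) : noise_correctable (sandwich K K).
Proof.
pose U (k : 'I_(dA * dB) * 'I_(dA * dB)) := K k.1 k.2 *: delta_mx k.1 k.2 : op.
have KE : K = \sum_k U k by rewrite {1}[K]matrix_sum_delta pair_bigA.
have cross k l : noise_correctable (fun rho =>
    sandwich (U k) (U l) rho + sandwich (U l) (U k) rho).
  exact: noise_correctable_cross.
have := noise_correctableZ half_ge0 (noise_correctable_sum (index_enum _)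
          (fun k => noise_correctable_sum (index_enum _) (cross k))).
apply: noise_correctable_ext => rho.
under eq_bigr do rewrite big_split /=.
rewrite big_split /= [X in _ + X]exchange_big /= -mulr2n scalerV_mulrn //.
rewrite KE sandwich_suml.
by apply: eq_bigr => k _; rewrite sandwich_sumr.
Qed.

Lemma quantum_operation_noise_correctable E : quantum_operation E -> noise_correctable E.
Proof.
move=> [Ks EKs]; apply: noise_correctable_ext (noise_correctable_sum Ks _) => [rho|K].
  by rewrite EKs.
exact: noise_correctable_sandwich.
Qed.
End Separable.

Local Open Scope classical_set_scope.

Lemma inf_le_add_add_mul (R : realType) (A B S : set R) :
  A !=set0 -> B !=set0 -> lbound A 0 -> lbound B 0 -> has_lbound S ->
  (forall s t, A s -> B t -> S (s + t + s * t)) ->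
  inf S <= inf A + inf B + inf A * inf B.
Proof.
move=> A0 B0 A_ge0 B_ge0 S_lb ABS.
have infA_ge0 : 0 <= inf A by apply: lb_le_inf.
have infS_le t : B t -> inf S + 1 <= (1 + inf A) * (1 + t).
  move=> Bt; have t_ge0 := B_ge0 t Bt.
  suff : (inf S + 1) / (1 + t) - 1 <= inf A by rewrite lerBlDr ler_pdivrMr; lra.
  apply: lb_le_inf => [//|s As]; have s_ge0 := A_ge0 s As.
  have := ge_inf S_lb (ABS s t As Bt).
  by rewrite lerBlDr ler_pdivrMr; [nra | lra].
suff : (inf S + 1) / (1 + inf A) - 1 <= inf B by rewrite lerBlDr ler_pdivrMr; nra.
apply: lb_le_inf => [//|t Bt]; have t_ge0 := B_ge0 t Bt; have := infS_le t Bt.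
by rewrite lerBlDr ler_pdivrMr; [nra | lra].
Qed.

Section Robustness.
Variables (R : realType) (dA dB : nat).
Hypotheses (dA_gt0 : (0 < dA)%N) (dB_gt0 : (0 < dB)%N).
Local Notation C := R[i].
Local Notation op := 'M[C]_(dA * dB).
Local Open Scope complex_scope.
Implicit Types (E : supop R dA dB) (rho : op).

Definition robustness_set E :=
  [set t : R | 0 <= t /\ separable (fun rho => E rho + t%:C *: depol rho)].

Lemma random_robustnessE E : random_robustness E = inf (robustness_set E).
Proof. by []. Qed.

Lemma robustness_set_ge0 E : lbound (robustness_set E) 0.
Proof. by move=> t []. Qed.

Let dim_neq0 : (dA * dB)%:R != 0 :> C.
Proof. by rewrite pnatr_eq0 muln_eq0 negb_or -!lt0n dA_gt0 dB_gt0. Qed.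

Lemma quantum_operation_robustness_set E : quantum_operation E -> robustness_set E !=set0.
Proof.
move=> /quantum_operation_noise_correctable [t t_ge0 sepE].
have td_ge0 : 0 <= t * (dA * dB)%:R by rewrite mulr_ge0 ?ler0n.
have [r rE] : exists r : R, t * (dA * dB)%:R = r%:C by apply/complex_realP/ger0_real.
exists r; split; first by rewrite -ler0c -rE.
apply: separable_ext sepE => rho.
by rewrite -rE /depol !scalerA -mulrA [_ * (_ / _)]mulrC divfK.
Qed.

Lemma quantum_operationD E : quantum_operation E -> forall A B, E (A + B) = E A + E B.
Proof.
move=> [Ks EKs] A B; rewrite !EKs /kraus_map -big_split.
by apply: eq_bigr => K _; rewrite mulmxDr mulmxDl.
Qed.

Lemma quantum_operationZ E : quantum_operation E -> forall (a : C) A, E (a *: A) = a *: E A.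
Proof.
move=> [Ks EKs] a A; rewrite !EKs /kraus_map scaler_sumr.
by apply: eq_bigr => K _; rewrite -scalemxAr -scalemxAl.
Qed.

Lemma depolD A B : depol (A + B) = depol A + depol B :> op.
Proof. by rewrite /depol mxtraceD mulrDl scalerDl. Qed.

Lemma depolZ (a : C) A : depol (a *: A) = a *: depol A :> op.
Proof. by rewrite /depol mxtraceZ scalerA mulrA. Qed.

Lemma depol_idem rho : depol (depol rho) = depol rho.
Proof. by rewrite /depol mxtraceZ mxtrace1 divfK. Qed.

Lemma depol_trace_preserving E :
  trace_preserving_qo E -> forall rho, depol (E rho) = depol rho.
Proof. by move=> [_ trE] rho; rewrite /depol trE. Qed.

Lemma doubly_stochastic_depol E :
  doubly_stochastic E -> forall rho, E (depol rho) = depol rho.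
Proof. by move=> [[qoE _] unitalE] rho; rewrite (quantum_operationZ qoE) unitalE. Qed.

Lemma robustness_set_comp E1 E2 s t :
  doubly_stochastic E1 -> trace_preserving_qo E2 ->
  robustness_set E1 s -> robustness_set E2 t -> robustness_set (E1 \o E2) (s + t + s * t).
Proof.
move=> dsE1 tpE2 [s_ge0 sepE1] [t_ge0 sepE2].
split; first by rewrite !addr_ge0 ?mulr_ge0.
apply: separable_ext (separable_comp sepE1 sepE2) => rho /=.
rewrite (quantum_operationD dsE1.1.1) (quantum_operationZ dsE1.1.1).
rewrite (doubly_stochastic_depol dsE1) depolD depolZ (depol_trace_preserving tpE2).
rewrite depol_idem !rmorphD rmorphM /=.
move: (E1 (E2 rho)) (depol rho) => F D.
by apply/matrixP => x y; rewrite !mxE; ring.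
Qed.

End Robustness.

Theorem proposition5 (R : realType) (dA dB : nat) (hA : (0 < dA)%N) (hB : (0 < dB)%N)
  (E1 E2 : supop R dA dB) :
  doubly_stochastic E1 -> trace_preserving_qo E2 ->
  random_robustness (E1 \o E2) <=
    random_robustness E1 + random_robustness E2
    + random_robustness E1 * random_robustness E2.
Proof.
move=> dsE1 tpE2; rewrite !random_robustnessE.
apply: inf_le_add_add_mul.
- exact: quantum_operation_robustness_set dsE1.1.1.
- exact: quantum_operation_robustness_set tpE2.1.
- exact: robustness_set_ge0.
- exact: robustness_set_ge0.
- by exists 0; apply: robustness_set_ge0.
- by move=> s t; apply: robustness_set_comp.
Qed.
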